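(* Let $h:\mathbb R\to\mathbb R$ be twice differentiable and satisfy: (i) $h''$ has finitely many zeros $\xi_1,\dots,\xi_n$, each of order at most $q_1>0$. That is, for each $k$ there are $a_k>0$ and a neighborhood of $\xi_k$ on which $|h''(\xi)|\ge a_k|\xi-\xi_k|^{q_1}$. (ii) There are constants $C_1,C_2>0$ and $q_2\ge0$ such that $|h''(\xi)|\ge C_2|\xi|^{q_2}$ whenever $|\xi|\ge C_1$. Then there is a constant $C$ such that the (improper) integral satisfies $$\Big|\int_{\mathbb R}e^{ith(\xi)}\,d\xi\Big|\le Ct^{-1/(2+q_2)}\quad (0<t<1),\qquad \Big|\int_{\mathbb R}e^{ith(\xi)}\,d\xi\Big|\le Ct^{-1/(2+q_1)}\quad (t\ge1).$$ *)

From Stdlib Require Import Reals List.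
Open Scope R_scope.

(* Nonnegative real power, with the convention 0 ^ q = 0 (used for q > 0). *)
Definition rpow (x q : R) : R := if Req_EM_T x 0 then 0 else Rpower x q.

Definition is_integral (f : R -> R) (a b v : R) : Prop :=
  exists pr : Riemann_integrable f a b, RiemannInt pr = v.

Definition improper_integral_R (f : R -> R) (I : R) : Prop :=
  forall eps, eps > 0 -> exists M, forall a b, a >= M -> b >= M ->
    exists v, is_integral f (- a) b v /\ Rabs (v - I) < eps.

(* |int_R e^{i t h}| as the modulus of (int cos(t h), int sin(t h)),
   the improper integral existing. *)
Definition osc_integral_bound (h : R -> R) (t B : R) : Prop :=
  exists Ic Is,
    improper_integral_R (fun x => cos (t * h x)) Ic /\
    improper_integral_R (fun x => sin (t * h x)) Is /\
    sqrt (Ic ^ 2 + Is ^ 2) <= B.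

From Stdlib Require Import Reals List Lra Classical.
From Coquelicot Require Import Coquelicot.
Open Scope R_scope.

(* The proof works with truncated integrals of cos (t h) and sin (t h) over
   intervals [a,b] (predicate osc_bound) and splits R at +-C1.
   - Van der Corput estimates, proved by integration by parts against 1/(t h'):
     if h' is monotone with |h'| >= d then the integral is <= 4/(t d); a
     sublevel-set refinement; and if h'' >= lam then it is <= 10/sqrt(lam t).
   - Outer region [C1, oo): h'' does not vanish, so (up to replacing h by -h) it
     is >= C2 x^q2; the sublevel estimate with the right level gives
     O(t^(-1/(2+q2))) for all t > 0, the second-derivative estimate gives
     O(t^(-1/2)), and h' grows linearly so the tails of the integral vanish.
     (-oo, -C1] is handled by the reflection x |-> -x.
   - Middle region [-C1, C1], t >= 1: near each point x0 the integral over a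
     one-sided neighbourhood is O(t^(-1/(2+q1))) -- at zeros of h'' by the
     order condition, at critical points of h by nondegeneracy of h'', and
     elsewhere because h' does not vanish -- and a supremum (compactness)
     argument globalises this.
   - The Cauchy criterion turns the uniform truncated bounds and the vanishing
     tails into the existence and the bound of the improper integral. *)

Definition twice_diff (g g1 g2 : R -> R) : Prop :=
  (forall x, is_derive g x (g1 x)) /\ (forall x, is_derive g1 x (g2 x)).

Definition osc_bound (g : R -> R) (a b t B : R) : Prop :=
  Rabs (RInt (fun x => cos (t * g x)) a b) <= B /\
  Rabs (RInt (fun x => sin (t * g x)) a b) <= B.

Lemma twice_diff_of_Reals (g g1 g2 : R -> R) :
  (forall x, derivable_pt_lim g x (g1 x)) ->
  (forall x, derivable_pt_lim g1 x (g2 x)) -> twice_diff g g1 g2.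
Proof. intros H1 H2; split; intro x; apply is_derive_Reals; auto. Qed.

Lemma is_derive_continuity_pt (f : R -> R) x l : is_derive f x l -> continuity_pt f x.
Proof.
  intro H; apply continuity_pt_filterlim.
  apply (ex_derive_continuous (V := R_NormedModule)).
  exists l; exact H.
Qed.

Lemma is_derive_reflect (f : R -> R) x l :
  is_derive f (- x) l -> is_derive (fun y => f (- y)) x (- l).
Proof.
  intro H.
  assert (Hopp : is_derive (fun y : R => - y) x (-1)).
  { auto_derive; auto; ring. }
  pose proof (is_derive_comp f (fun y => - y) x l (-1) H Hopp) as K.
  replace (- l) with (scal (-1) l) by (unfold scal; simpl; unfold mult; simpl; ring).
  exact K.
Qed.

Lemma twice_diff_opp (g g1 g2 : R -> R) : twice_diff g g1 g2 ->
  twice_diff (fun x => - g x) (fun x => - g1 x) (fun x => - g2 x).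
Proof. intros [H1 H2]; split; intro x; apply (is_derive_opp (V := R_NormedModule)); auto. Qed.

Lemma twice_diff_reflect (g g1 g2 : R -> R) : twice_diff g g1 g2 ->
  twice_diff (fun x => g (- x)) (fun x => - g1 (- x)) (fun x => g2 (- x)).
Proof.
  intros [H1 H2]; split; intro x.
  - apply is_derive_reflect; auto.
  - rewrite <- (Ropp_involutive (g2 (- x))).
    apply (is_derive_opp (V := R_NormedModule) (fun y => g1 (- y))).
    apply is_derive_reflect; auto.
Qed.

Section Phase.
Variables (g g1 g2 : R -> R) (t : R).
Hypothesis HD : twice_diff g g1 g2.

Lemma continuous_phase x : continuous (fun y => t * g y) x.
Proof.
  apply (ex_derive_continuous (V := R_NormedModule)); exists (t * g1 x).
  apply is_derive_scal, (proj1 HD).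
Qed.

Lemma ex_RInt_phase_cos a b : ex_RInt (fun y => cos (t * g y)) a b.
Proof.
  apply (ex_RInt_continuous (V := R_CompleteNormedModule)); intros x _.
  apply continuous_cos_comp, continuous_phase.
Qed.

Lemma ex_RInt_phase_sin a b : ex_RInt (fun y => sin (t * g y)) a b.
Proof.
  apply (ex_RInt_continuous (V := R_CompleteNormedModule)); intros x _.
  apply continuous_sin_comp, continuous_phase.
Qed.

Lemma osc_bound_chasles a b c B1 B2 :
  osc_bound g a b t B1 -> osc_bound g b c t B2 -> osc_bound g a c t (B1 + B2).
Proof.
  intros [A1 A2] [A3 A4]; split.
  - rewrite <- (RInt_Chasles _ a b c) by apply ex_RInt_phase_cos.
    eapply Rle_trans; [apply Rabs_triang|lra].
  - rewrite <- (RInt_Chasles _ a b c) by apply ex_RInt_phase_sin.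
    eapply Rle_trans; [apply Rabs_triang|lra].
Qed.

Lemma osc_bound_length a b : a <= b -> osc_bound g a b t (b - a).
Proof.
  intro Hab; rewrite <- (Rmult_1_r (b - a)); split;
    apply abs_RInt_le_const; auto;
    try apply ex_RInt_phase_cos; try apply ex_RInt_phase_sin;
    intros x _; apply Rabs_le.
  - apply COS_bound.
  - apply SIN_bound.
Qed.

(* Replacing g by -g conjugates the integral. *)
Lemma osc_bound_opp a b B : osc_bound (fun x => - g x) a b t B -> osc_bound g a b t B.
Proof.
  intros [A1 A2]; split.
  - erewrite RInt_ext in A1; [exact A1|].
    intros x _; simpl; rewrite <- Ropp_mult_distr_r, cos_neg; reflexivity.
  - erewrite RInt_ext in A2.
    2:{ intros x _; simpl; rewrite <- Ropp_mult_distr_r, sin_neg; reflexivity. }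
    rewrite (RInt_opp (V := R_CompleteNormedModule) (fun x => sin (t * g x)))
      in A2 by apply ex_RInt_phase_sin.
    unfold opp in A2; simpl in A2; rewrite Rabs_Ropp in A2; exact A2.
Qed.

End Phase.

Lemma osc_bound_weaken g a b t B B' : B <= B' -> osc_bound g a b t B -> osc_bound g a b t B'.
Proof. intros Hl [A1 A2]; split; lra. Qed.

Lemma osc_bound_point g a t : osc_bound g a a t 0.
Proof. split; rewrite RInt_point; unfold zero; simpl; rewrite Rabs_R0; lra. Qed.

Lemma RInt_reflect (f : R -> R) a b : (forall u v, ex_RInt f u v) ->
  RInt (fun x => f (- x)) (- b) (- a) = RInt f a b.
Proof.
  intro Hex.
  assert (E := RInt_comp_lin f (-1) 0 (- b) (- a)).
  replace (-1 * - b + 0) with b in E by ring.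
  replace (-1 * - a + 0) with a in E by ring.
  specialize (E (Hex _ _)).
  assert (Hex' : ex_RInt (fun y => f (- y)) (- b) (- a)).
  { apply (ex_RInt_ext (fun y => opp (opp (f (- y))))).
    - intros; apply opp_opp.
    - apply (ex_RInt_opp (V := R_NormedModule)).
      apply (ex_RInt_comp_opp (V := R_NormedModule)); apply Hex. }
  rewrite (RInt_ext _ (fun y => opp (f (- y)))) in E.
  2:{ intros; unfold scal, opp; simpl; unfold mult; simpl.
      replace (-1 * x + 0) with (- x) by ring; ring. }
  rewrite (RInt_opp (V := R_CompleteNormedModule)) in E by exact Hex'.
  rewrite <- (opp_RInt_swap (V := R_CompleteNormedModule) f) in E by apply Hex.
  unfold opp in E; simpl in E; lra.
Qed.

Lemma osc_bound_reflect g g1 g2 a b t B : twice_diff g g1 g2 ->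
  osc_bound (fun x => g (- x)) (- b) (- a) t B -> osc_bound g a b t B.
Proof.
  intros HD [A1 A2]; split.
  - rewrite (RInt_reflect (fun x => cos (t * g x))) in A1; auto.
    intros; apply (ex_RInt_phase_cos g g1 g2); auto.
  - rewrite (RInt_reflect (fun x => sin (t * g x))) in A2; auto.
    intros; apply (ex_RInt_phase_sin g g1 g2); auto.
Qed.

Lemma mean_value (f f' : R -> R) x y : (forall z, is_derive f z (f' z)) -> x <= y ->
  exists c, x <= c <= y /\ f y - f x = f' c * (y - x).
Proof.
  intros Hd Hxy.
  destruct (MVT_gen f x y f') as [c [Hc E]].
  - intros; apply Hd.
  - intros; eapply is_derive_continuity_pt; apply Hd.
  - rewrite Rmin_left in Hc by exact Hxy; rewrite Rmax_right in Hc by exact Hxy.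
    exists c; split; assumption.
Qed.

Lemma nondecreasing_of_derive_nonneg (F dF : R -> R) a b :
  (forall x, a <= x <= b -> is_derive F x (dF x)) ->
  (forall x, a <= x <= b -> 0 <= dF x) ->
  forall x y, a <= x -> x <= y -> y <= b -> F x <= F y.
Proof.
  intros Hd Hp x y Hax Hxy Hyb.
  destruct (MVT_gen F x y dF) as [c [Hc E]].
  - intros z Hz; rewrite Rmin_left, Rmax_right in Hz by lra; apply Hd; lra.
  - intros z Hz; rewrite Rmin_left, Rmax_right in Hz by lra.
    eapply is_derive_continuity_pt; apply Hd; lra.
  - rewrite Rmin_left, Rmax_right in Hc by lra.
    assert (0 <= dF c * (y - x)) by (apply Rmult_le_pos; [apply Hp|]; lra).
    lra.
Qed.

Lemma derive_linearization (f : R -> R) x l : derivable_pt_lim f x l ->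
  forall eps, 0 < eps -> exists del, 0 < del /\ forall z, Rabs (z - x) < del ->
    Rabs (f z - f x - l * (z - x)) <= eps * Rabs (z - x).
Proof.
  intros H eps He. destruct (H eps He) as [d Hd]. exists d; split; [apply cond_pos|].
  intros z Hz. destruct (Req_dec z x) as [E|N].
  { subst z; replace (f x - f x - l * (x - x)) with 0 by ring.
    rewrite Rminus_diag, Rabs_R0; lra. }
  specialize (Hd (z - x) ltac:(lra) Hz). replace (x + (z - x)) with z in Hd by ring.
  replace (f z - f x - l * (z - x)) with (((f z - f x) / (z - x) - l) * (z - x))
    by (field; lra).
  rewrite Rabs_mult; apply Rmult_le_compat_r; [apply Rabs_pos|lra].
Qed.

Lemma exceeds_right_of_derive_pos (f : R -> R) x l : derivable_pt_lim f x l -> l > 0 ->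
  forall y, x < y -> exists s, x < s <= y /\ f s > f x.
Proof.
  intros H Hl y Hy.
  destruct (derive_linearization f x l H (l / 2) ltac:(lra)) as [d [Hd Hlin]].
  assert (Hr : 0 < Rmin (d / 2) (y - x)) by (apply Rmin_pos; lra).
  pose proof (Rmin_l (d / 2) (y - x)); pose proof (Rmin_r (d / 2) (y - x)).
  set (r := Rmin (d / 2) (y - x)) in *.
  exists (x + r); split; [lra|].
  specialize (Hlin (x + r) ltac:(rewrite Rabs_pos_eq; lra)).
  rewrite (Rabs_pos_eq (x + r - x)) in Hlin by lra.
  apply Rabs_le_between in Hlin; nra.
Qed.

Lemma darboux (f f' : R -> R) x y : (forall z, is_derive f z (f' z)) -> x < y ->
  f' x > 0 -> f' y < 0 -> exists c, x < c < y /\ f' c = 0.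
Proof.
  intros Hd Hxy Hx Hy.
  assert (Hlim : forall z, derivable_pt_lim f z (f' z))
    by (intro; apply is_derive_Reals, Hd).
  destruct (continuity_ab_maj f x y ltac:(lra)) as [M [HM HMr]].
  { intros; eapply is_derive_continuity_pt; apply Hd. }
  assert (Mx : M <> x).
  { intro E; subst M.
    destruct (exceeds_right_of_derive_pos f x (f' x) (Hlim x) Hx y Hxy) as [s [Hs Hfs]].
    specialize (HM s ltac:(lra)); lra. }
  assert (My : M <> y).
  { intro E; subst M.
    destruct (exceeds_right_of_derive_pos (fun z => f (- z)) (- y) (- f' y))
      with (- x) as [s [Hs Hfs]]; [|lra|lra|].
    - apply is_derive_Reals, is_derive_reflect; rewrite Ropp_involutive; apply Hd.
    - rewrite Ropp_involutive in Hfs; specialize (HM (- s) ltac:(lra)); lra. }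
  exists M; split; [lra|].
  pose (pr := exist _ (f' M) (Hlim M) : derivable_pt f M).
  rewrite <- (derive_pt_eq_0 f M (f' M) pr (Hlim M)).
  apply (deriv_maximum f x y M pr); [lra|lra|].
  intros z Hz1 Hz2; apply HM; lra.
Qed.

Lemma derive_sign_constant (f f' : R -> R) u v : (forall x, is_derive f x (f' x)) ->
  (forall z, u <= z <= v -> f' z <> 0) ->
  (forall z, u <= z <= v -> f' z > 0) \/ (forall z, u <= z <= v -> f' z < 0).
Proof.
  intros Hd Hnz.
  assert (Hopp : forall z, is_derive (fun y => - f y) z (- f' z))
    by (intro; apply (is_derive_opp (V := R_NormedModule)), Hd).
  (* f' z has the sign of f' u: a sign change would give a zero in between. *)
  assert (Hkeep : forall z, u <= z <= v -> f' u * f' z > 0).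
  { intros z Hz; pose proof (Hnz u ltac:(lra)); pose proof (Hnz z Hz).
    destruct (Req_dec z u) as [->|Nzu]; [nra|].
    destruct (Rlt_or_le 0 (f' u * f' z)) as [P|N]; [exact P|exfalso].
    destruct (Rlt_or_le 0 (f' u)) as [Pu|Nu].
    - destruct (darboux f f' u z Hd ltac:(lra) Pu ltac:(nra)) as [c [Hc Ec]].
      apply (Hnz c); lra.
    - destruct (darboux (fun y => - f y) (fun y => - f' y) u z Hopp ltac:(lra))
        as [c [Hc Ec]]; [lra|nra|].
      apply (Hnz c); lra. }
  destruct (Rlt_or_le 0 (f' u)) as [P|N]; [left|right]; intros z Hz;
    pose proof (Hkeep z Hz); nra.
Qed.

Lemma abs_increment_le (F G dF dG : R -> R) a b : a <= b ->
  (forall x, a <= x <= b -> is_derive F x (dF x)) ->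
  (forall x, a <= x <= b -> is_derive G x (dG x)) ->
  (forall x, a <= x <= b -> Rabs (dF x) <= dG x) ->
  Rabs (F b - F a) <= G b - G a.
Proof.
  intros Hab HF HG Hle.
  assert (Hminus : G a - F a <= G b - F b).
  { apply (nondecreasing_of_derive_nonneg (fun x => G x - F x) (fun x => dG x - dF x) a b);
      try lra.
    - intros x Hx; apply is_derive_Reals, derivable_pt_lim_minus; apply is_derive_Reals; auto.
    - intros x Hx; pose proof (Hle x Hx); pose proof (Rle_abs (dF x)); lra. }
  assert (Hplus : G a + F a <= G b + F b).
  { apply (nondecreasing_of_derive_nonneg (fun x => G x + F x) (fun x => dG x + dF x) a b);
      try lra.
    - intros x Hx; apply is_derive_Reals, derivable_pt_lim_plus; apply is_derive_Reals; auto.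
    - intros x Hx; pose proof (Hle x Hx); pose proof (Rle_abs (- dF x)).
      rewrite Rabs_Ropp in *; lra. }
  apply Rabs_le; lra.
Qed.

Lemma abs_div_le s w m : Rabs s <= 1 -> 0 < m -> m <= Rabs w -> Rabs (s / w) <= 1 / m.
Proof.
  intros Hs Hm Hw.
  assert (Hw0 : 0 < Rabs w) by lra.
  unfold Rdiv; rewrite Rabs_mult, Rabs_inv, Rmult_1_l.
  apply Rle_trans with (1 * / Rabs w).
  - apply Rmult_le_compat_r; [left; apply Rinv_0_lt_compat|]; lra.
  - rewrite Rmult_1_l; apply Rinv_le_contravar; lra.
Qed.

Lemma is_derive_RInt_upper (f : R -> R) a x : (forall u v, ex_RInt f u v) ->
  continuous f x -> is_derive (fun y => RInt f a y) x (f x).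
Proof.
  intros He Hc; apply (is_derive_RInt (V := R_CompleteNormedModule) f _ a); auto.
  exists (mkposreal 1 Rlt_0_1); intros; apply (RInt_correct (V := R_CompleteNormedModule)); auto.
Qed.

(* Integration by parts against the phase: for a profile u with primitive v,
   the function int_a^x u (phi) - v (phi) / phi' has derivative
   v (phi) phi'' / phi'^2 wherever phi' does not vanish. *)
Section ProfileIntegral.
Variables (u v phi phi1 phi2 : R -> R).
Hypotheses (HD : twice_diff phi phi1 phi2) (Hv : forall y, is_derive v y (u y))
  (Hu : forall y, continuous u y).

Lemma ex_RInt_profile p q : ex_RInt (fun y => u (phi y)) p q.
Proof.
  apply (ex_RInt_continuous (V := R_CompleteNormedModule)); intros x _.
  apply (continuous_comp phi u); [|apply Hu].
  apply (ex_derive_continuous (V := R_NormedModule)); exists (phi1 x); apply (proj1 HD).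
Qed.

Lemma is_derive_profile_remainder a x : phi1 x <> 0 ->
  is_derive (fun y => RInt (fun z => u (phi z)) a y - v (phi y) / phi1 y) x
            (v (phi x) * phi2 x / phi1 x ^ 2).
Proof.
  intro Hnz.
  replace (v (phi x) * phi2 x / phi1 x ^ 2) with
    (u (phi x) - (u (phi x) * phi1 x * phi1 x - v (phi x) * phi2 x) / phi1 x ^ 2)
    by (field; exact Hnz).
  apply is_derive_Reals.
  apply (derivable_pt_lim_minus (fun y => RInt (fun z => u (phi z)) a y)
                                (fun y => v (phi y) / phi1 y)); apply is_derive_Reals.
  - apply (is_derive_RInt_upper (fun z => u (phi z))); [exact ex_RInt_profile|].
    apply (continuous_comp phi u); [|apply Hu].
    apply (ex_derive_continuous (V := R_NormedModule)); exists (phi1 x); apply (proj1 HD).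
  - apply (is_derive_div (fun y => v (phi y)) phi1); [|apply (proj2 HD)|exact Hnz].
    replace (u (phi x) * phi1 x) with (scal (phi1 x) (u (phi x)))
      by (unfold scal; simpl; unfold mult; simpl; ring).
    apply (is_derive_comp v phi); [apply Hv|apply (proj1 HD)].
Qed.

(* The majorant -1/phi' of the remainder has derivative phi''/phi'^2. *)
Lemma is_derive_neg_inv_slope x : phi1 x <> 0 ->
  is_derive (fun y => - / phi1 y) x (phi2 x / phi1 x ^ 2).
Proof.
  intro Hnz.
  replace (phi2 x / phi1 x ^ 2) with (- (- phi2 x / phi1 x ^ 2)) by (field; exact Hnz).
  apply (is_derive_opp (V := R_NormedModule) (fun y => / phi1 y)).
  apply (is_derive_inv phi1); [apply (proj2 HD)|exact Hnz].
Qed.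

(* The remainder's
   derivative is dominated by that of -1/phi', whose increment is <= 2/m, and
   the boundary terms v (phi) / phi' are at most 1/m each. *)
Lemma van_der_corput_profile a b m : (forall y, Rabs (v y) <= 1) -> a <= b -> 0 < m ->
  (forall x, a <= x <= b -> 0 <= phi2 x) -> (forall x, a <= x <= b -> m <= Rabs (phi1 x)) ->
  Rabs (RInt (fun x => u (phi x)) a b) <= 4 / m.
Proof.
  intros Hvb Hab Hm Hconvex Hslope.
  assert (Hnz : forall x, a <= x <= b -> phi1 x <> 0).
  { intros x Hx E; specialize (Hslope x Hx); rewrite E, Rabs_R0 in Hslope; lra. }
  assert (Hcomp : Rabs ((RInt (fun z => u (phi z)) a b - v (phi b) / phi1 b)
                        - (RInt (fun z => u (phi z)) a a - v (phi a) / phi1 a))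
                  <= - / phi1 b - - / phi1 a).
  { apply (abs_increment_le (fun y => RInt (fun z => u (phi z)) a y - v (phi y) / phi1 y)
                            (fun y => - / phi1 y) (fun x => v (phi x) * phi2 x / phi1 x ^ 2)
                                (fun x => phi2 x / phi1 x ^ 2) a b Hab).
    - intros x Hx; apply is_derive_profile_remainder, Hnz, Hx.
    - intros x Hx; apply is_derive_neg_inv_slope, Hnz, Hx.
    - intros x Hx; unfold Rdiv; rewrite Rmult_assoc, Rabs_mult.
      assert (0 <= phi2 x * / phi1 x ^ 2)
        by (apply Rmult_le_pos; [apply Hconvex, Hx|]; left;
            apply Rinv_0_lt_compat, pow2_gt_0, Hnz, Hx).
      rewrite (Rabs_pos_eq (phi2 x * / phi1 x ^ 2)) by assumption.
      rewrite <- (Rmult_1_l (phi2 x * / phi1 x ^ 2)) at 2.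
      apply Rmult_le_compat_r; [assumption|apply Hvb]. }
  assert (Hend : forall x s, a <= x <= b -> Rabs s <= 1 -> Rabs (s / phi1 x) <= 1 / m)
    by (intros; apply abs_div_le; auto).
  pose proof (Hend a (v (phi a)) ltac:(lra) (Hvb _)) as Ea.
  pose proof (Hend b (v (phi b)) ltac:(lra) (Hvb _)) as Eb.
  pose proof (Hend a 1 ltac:(lra) ltac:(rewrite Rabs_R1; lra)) as Ga.
  pose proof (Hend b 1 ltac:(lra) ltac:(rewrite Rabs_R1; lra)) as Gb.
  rewrite RInt_point in Hcomp; unfold zero in Hcomp; simpl in Hcomp.
  apply Rabs_le_between in Ea, Eb, Ga, Gb, Hcomp; apply Rabs_le.
  unfold Rdiv in *; rewrite Rmult_1_l in Ga, Gb; lra.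
Qed.

End ProfileIntegral.

Lemma twice_diff_scal (g g1 g2 : R -> R) t : twice_diff g g1 g2 ->
  twice_diff (fun x => t * g x) (fun x => t * g1 x) (fun x => t * g2 x).
Proof. intros [H1 H2]; split; intro x; apply is_derive_scal; auto. Qed.

(* The estimate for e^{i t g}: apply it to phi = t g with m = t d, to the
   profiles cos (primitive sin) and sin (primitive -cos). *)
Lemma van_der_corput_first g g1 g2 a b t d : twice_diff g g1 g2 -> a <= b -> 0 < t -> 0 < d ->
  (forall x, a <= x <= b -> 0 <= g2 x) -> (forall x, a <= x <= b -> d <= Rabs (g1 x)) ->
  osc_bound g a b t (4 / (t * d)).
Proof.
  intros HD Hab Ht Hd Hp Hl.
  pose proof (twice_diff_scal g g1 g2 t HD) as HDt.
  assert (Hm : 0 < t * d) by (apply Rmult_lt_0_compat; lra).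
  assert (Hconvex : forall x, a <= x <= b -> 0 <= t * g2 x)
    by (intros; apply Rmult_le_pos; [lra|auto]).
  assert (Hslope : forall x, a <= x <= b -> t * d <= Rabs (t * g1 x)).
  { intros x Hx; rewrite Rabs_mult, (Rabs_pos_eq t) by lra.
    apply Rmult_le_compat_l; [lra|auto]. }
  split.
  - apply (van_der_corput_profile cos sin _ _ _ HDt); auto.
    + intro; apply is_derive_sin.
    + apply continuous_cos.
    + intro; apply Rabs_le, SIN_bound.
  - apply (van_der_corput_profile sin (fun y => - cos y) _ _ _ HDt); auto.
    + intro y; rewrite <- (Ropp_involutive (sin y)).
      apply (is_derive_opp (V := R_NormedModule)), is_derive_cos.
    + apply continuous_sin.
    + intro; rewrite Rabs_Ropp; apply Rabs_le, COS_bound.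
Qed.

Lemma intermediate_value (f : R -> R) a b c : continuity f -> a <= b ->
  f a <= c <= f b -> exists z, a <= z <= b /\ f z = c.
Proof.
  intros Hf Hab Hc.
  destruct (IVT_cor (fun x => f x - c) a b) as [z [Hz E]]; auto.
  - intro x; apply continuity_pt_minus; [apply Hf|apply continuity_pt_const; intros ? ?; auto].
  - assert (0 <= f b - c) by lra; assert (f a - c <= 0) by lra; nra.
  - exists z; split; [exact Hz|lra].
Qed.

Section VanDerCorput.
Variables (g g1 g2 : R -> R) (t : R).
Hypotheses (HD : twice_diff g g1 g2) (Ht : 0 < t).

Lemma continuity_first_derivative : continuity g1.
Proof. intro x; eapply is_derive_continuity_pt; apply (proj2 HD). Qed.

Lemma first_derivative_nondecreasing a b : (forall x, a <= x <= b -> 0 <= g2 x) ->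
  forall x y, a <= x -> x <= y -> y <= b -> g1 x <= g1 y.
Proof. apply nondecreasing_of_derive_nonneg; intros; apply (proj2 HD). Qed.

Lemma sublevel_entry a b d : 0 < d -> a <= b -> (forall x, a <= x <= b -> 0 <= g2 x) ->
  g1 a < d -> - d < g1 b ->
  exists al, a <= al <= b /\ - d <= g1 al <= d /\ osc_bound g a al t (4 / (t * d)).
Proof.
  intros Hd Hab Hp Ha Hb.
  assert (Hbound : 0 < 4 / (t * d)) by (apply Rdiv_lt_0_compat; [lra|nra]).
  destruct (Rle_or_lt (- d) (g1 a)) as [Ha'|Ha'].
  - exists a; split; [lra|split; [lra|]].
    eapply osc_bound_weaken; [|apply osc_bound_point]; lra.
  - destruct (intermediate_value g1 a b (- d) continuity_first_derivative Hab)
      as [al [Hal E]]; [lra|].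
    exists al; split; [lra|split; [lra|]].
    apply (van_der_corput_first g g1 g2); auto; try lra.
    + intros; apply Hp; lra.
    + intros x Hx.
      assert (g1 x <= g1 al) by (apply (first_derivative_nondecreasing a b Hp); lra).
      rewrite Rabs_left1; lra.
Qed.

Lemma sublevel_exit a b d : 0 < d -> a <= b -> (forall x, a <= x <= b -> 0 <= g2 x) ->
  g1 a <= d -> exists be, a <= be <= b /\ g1 be <= d /\ osc_bound g be b t (4 / (t * d)).
Proof.
  intros Hd Hab Hp Ha.
  assert (Hbound : 0 < 4 / (t * d)) by (apply Rdiv_lt_0_compat; [lra|nra]).
  destruct (Rle_or_lt (g1 b) d) as [Hb|Hb].
  - exists b; split; [lra|split; [lra|]].
    eapply osc_bound_weaken; [|apply osc_bound_point]; lra.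
  - destruct (intermediate_value g1 a b d continuity_first_derivative Hab)
      as [be [Hbe E]]; [lra|].
    exists be; split; [lra|split; [lra|]].
    apply (van_der_corput_first g g1 g2); auto; try lra.
    + intros; apply Hp; lra.
    + intros x Hx.
      assert (g1 be <= g1 x) by (apply (first_derivative_nondecreasing a b Hp); lra).
      rewrite Rabs_pos_eq; lra.
Qed.

(* If every subinterval on which g' increases by at most 2d has length <= L,
   then the integral over [a,b] is at most L + 8/(t d): van der Corput on the
   two ends where |g'| >= d, the trivial bound on the sublevel set in between. *)
Lemma van_der_corput_sublevel a b d L : a <= b -> 0 < d ->
  (forall x, a <= x <= b -> 0 <= g2 x) ->
  (forall x y, a <= x -> x <= y -> y <= b -> g1 y - g1 x <= 2 * d -> y - x <= L) ->
  osc_bound g a b t (L + 8 / (t * d)).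
Proof.
  intros Hab Hd Hp HLen.
  assert (HL : 0 <= L) by (apply (Rle_trans _ (a - a)); [lra|apply HLen; lra]).
  assert (Hbound : 0 < 4 / (t * d)) by (apply Rdiv_lt_0_compat; [lra|nra]).
  assert (E8 : 8 / (t * d) = 4 / (t * d) + 4 / (t * d)) by (field; lra).
  pose proof (first_derivative_nondecreasing a b Hp) as Mono.
  destruct (Rle_or_lt (g1 b) (- d)) as [Hb|Hb].
  { apply (osc_bound_weaken _ _ _ _ (4 / (t * d))); [lra|].
    apply (van_der_corput_first g g1 g2); auto.
    intros x Hx; assert (g1 x <= g1 b) by (apply Mono; lra); rewrite Rabs_left1; lra. }
  destruct (Rle_or_lt d (g1 a)) as [Ha|Ha].
  { apply (osc_bound_weaken _ _ _ _ (4 / (t * d))); [lra|].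
    apply (van_der_corput_first g g1 g2); auto.
    intros x Hx; assert (g1 a <= g1 x) by (apply Mono; lra); rewrite Rabs_pos_eq; lra. }
  destruct (sublevel_entry a b d Hd Hab Hp Ha Hb) as [al [Hal [Hgal Bal]]].
  destruct (sublevel_exit al b d Hd ltac:(lra)) as [be [Hbe [Hgbe Bbe]]];
    [intros; apply Hp; lra|lra|].
  assert (Hlen : be - al <= L) by (apply HLen; lra).
  pose proof (osc_bound_length g g1 g2 t HD al be ltac:(lra)) as Bmid.
  pose proof (osc_bound_chasles g g1 g2 t HD _ _ _ _ _
                (osc_bound_chasles g g1 g2 t HD _ _ _ _ _ Bal Bmid) Bbe) as B.
  eapply osc_bound_weaken; [|exact B]; lra.
Qed.

Lemma van_der_corput_second a b lam : a <= b -> 0 < lam ->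
  (forall x, a <= x <= b -> lam <= g2 x) -> osc_bound g a b t (10 / sqrt (lam * t)).
Proof.
  intros Hab Hl Hg.
  set (s := sqrt (lam * t)).
  assert (Hs : 0 < s) by (apply sqrt_lt_R0; apply Rmult_lt_0_compat; auto).
  assert (Hss : s * s = lam * t) by (apply sqrt_sqrt; nra).
  eapply osc_bound_weaken;
    [|apply (van_der_corput_sublevel a b (s / t) (2 / s)); auto].
  - replace (t * (s / t)) with s by (field; lra); right; field; lra.
  - apply Rdiv_lt_0_compat; lra.
  - intros x Hx; pose proof (Hg x Hx); lra.
  - (* g' grows at rate >= lam, so it rises by 2 s/t within length 2/s. *)
    intros x y Hx Hxy Hy Hrise.
    destruct (mean_value g1 g2 x y (proj2 HD) Hxy) as [c [Hc E]].
    assert (lam <= g2 c) by (apply Hg; lra).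
    assert (Hyx : lam * (y - x) <= 2 * (s / t)) by nra.
    apply (Rmult_le_reg_l lam); [exact Hl|].
    replace (lam * (2 / s)) with (2 * (s / t)); [exact Hyx|].
    replace (2 * (s / t)) with (2 * (s * s) / (t * s)) by (field; lra).
    rewrite Hss; field; lra.
Qed.

End VanDerCorput.

Lemma Rpower_pos x y : 0 < Rpower x y.
Proof. unfold Rpower; apply exp_pos. Qed.

Lemma rpow_pos_eq x q : 0 < x -> rpow x q = Rpower x q.
Proof. intro H; unfold rpow; destruct (Req_EM_T x 0); [lra|reflexivity]. Qed.

Lemma Rpower_le_root w p K : 0 < w -> 0 < p -> Rpower w p <= K -> w <= Rpower K (1 / p).
Proof.
  intros Hw Hp H.
  replace w with (Rpower (Rpower w p) (1 / p)).
  2:{ rewrite Rpower_mult; replace (p * (1 / p)) with 1 by (field; lra).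
      apply Rpower_1; exact Hw. }
  apply Rle_Rpower_l; [left; apply Rdiv_lt_0_compat; lra|].
  split; [apply Rpower_pos|exact H].
Qed.

Lemma sublevel_length_of_growth g g1 g2 R0 b C2 q2 d : twice_diff g g1 g2 ->
  0 < R0 -> 0 < C2 -> 0 <= q2 ->
  (forall x, R0 <= x -> C2 * Rpower x q2 <= g2 x) ->
  forall x y, R0 <= x -> x <= y -> y <= b -> g1 y - g1 x <= 2 * d ->
  y - x <= 2 * Rpower (2 * d / C2) (1 / (1 + q2)).
Proof.
  intros HD HR HC Hq Hlow x y Hx Hxy Hy Hrise.
  assert (Hpos : forall z, R0 <= z <= b -> 0 <= g2 z).
  { intros z Hz; apply Rle_trans with (C2 * Rpower z q2);
      [apply Rmult_le_pos; [lra|left; apply Rpower_pos]|apply Hlow; lra]. }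
  destruct (Req_dec x y) as [<-|Nxy].
  { rewrite Rminus_diag; apply Rmult_le_pos; [lra|left; apply Rpower_pos]. }
  (* Compare the rise of g' on the right half [m,y] with g'' >= C2 w^q2 there. *)
  set (m := (x + y) / 2); set (w := (y - x) / 2).
  assert (Hw : 0 < w) by (unfold w; lra).
  assert (Hmono : g1 x <= g1 m)
    by (apply (first_derivative_nondecreasing g g1 g2 HD R0 b Hpos); unfold m; lra).
  destruct (mean_value g1 g2 m y (proj2 HD) ltac:(unfold m; lra)) as [c [Hc E]].
  assert (Hg2c : C2 * Rpower c q2 <= g2 c) by (apply Hlow; unfold m in Hc; lra).
  assert (Hcw : Rpower w q2 <= Rpower c q2)
    by (apply Rle_Rpower_l; [exact Hq|]; unfold m, w in *; lra).
  assert (Hym : y - m = w) by (unfold m, w; field).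
  assert (Key : C2 * Rpower w (1 + q2) <= 2 * d).
  { rewrite Rpower_plus, Rpower_1 by exact Hw.
    assert (0 <= Rpower w q2) by (left; apply Rpower_pos).
    assert (C2 * Rpower w q2 <= g2 c) by nra.
    rewrite Hym in E; nra. }
  assert (Hroot : w <= Rpower (2 * d / C2) (1 / (1 + q2))).
  { apply Rpower_le_root; [exact Hw|lra|].
    apply (Rmult_le_reg_l C2); [exact HC|].
    replace (C2 * (2 * d / C2)) with (2 * d) by (field; lra); exact Key. }
  unfold w in Hroot; lra.
Qed.

Definition decay_rate (q t : R) : R := Rpower t (- (1 / (2 + q))).

Lemma decay_rate_pos q t : 0 < decay_rate q t.
Proof. apply Rpower_pos. Qed.

(* Uniform-in-b bound on [R0,b] with the decay rate t^(-1/(2+q2)), valid for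
   all t > 0: choose the level d = t^(-(1+q2)/(2+q2)) in the sublevel estimate. *)
Lemma outer_bound_growth g g1 g2 R0 C2 q2 : twice_diff g g1 g2 ->
  0 < R0 -> 0 < C2 -> 0 <= q2 ->
  (forall x, R0 <= x -> C2 * Rpower x q2 <= g2 x) ->
  forall t b, 0 < t -> R0 <= b ->
  osc_bound g R0 b t ((2 * Rpower (2 / C2) (1 / (1 + q2)) + 8) * decay_rate q2 t).
Proof.
  intros HD HR HC Hq Hlow t b Ht Hb; unfold decay_rate.
  set (p := 1 + q2); set (e := 2 + q2).
  assert (Hp : 0 < p) by (unfold p; lra); assert (He : 0 < e) by (unfold e; lra).
  set (d := Rpower t (- (p / e))).
  assert (Hd : 0 < d) by apply Rpower_pos.
  eapply osc_bound_weaken;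
    [|apply (van_der_corput_sublevel g g1 g2 t HD Ht R0 b d
               (2 * Rpower (2 * d / C2) (1 / p)) Hb Hd)].
  - right.
    replace (2 * d / C2) with ((2 / C2) * d) by (field; lra).
    rewrite <- Rpower_mult_distr by (try apply Rdiv_lt_0_compat; lra).
    unfold d at 1; rewrite Rpower_mult.
    replace (- (p / e) * (1 / p)) with (- (1 / e)) by (field; lra).
    replace (t * d) with (Rpower t (1 / e)).
    2:{ unfold d; rewrite <- (Rpower_1 t) at 2 by exact Ht; rewrite <- Rpower_plus.
        f_equal; unfold p, e; field; lra. }
    rewrite (Rpower_Ropp t (1 / e)); unfold e; field.
    apply Rgt_not_eq, Rpower_pos.
  - intros x Hx; apply Rle_trans with (C2 * Rpower x q2);
      [apply Rmult_le_pos; [lra|left; apply Rpower_pos]|apply Hlow; lra].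
  - intros x y Hx Hxy Hy Hrise.
    apply (sublevel_length_of_growth g g1 g2 R0 b C2 q2 d); auto.
Qed.

Definition vanishing_tail (g : R -> R) (R0 t : R) : Prop :=
  forall eps, 0 < eps -> exists M, R0 <= M /\
    forall b b', M <= b -> b <= b' -> osc_bound g b b' t eps.

(* If g'' >= lam > 0 on [R0, oo), then g' grows at least linearly and the
   first-derivative estimate makes the tails vanish. *)
Lemma vanishing_tail_of_convexity g g1 g2 R0 lam t : twice_diff g g1 g2 -> 0 < lam -> 0 < t ->
  (forall x, R0 <= x -> lam <= g2 x) -> vanishing_tail g R0 t.
Proof.
  intros HD Hl Ht Hlow eps He.
  set (d := 4 / (t * eps)).
  assert (Hd : 0 < d) by (unfold d; apply Rdiv_lt_0_compat; [lra|apply Rmult_lt_0_compat; auto]).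
  assert (Hq : 0 <= (Rabs (g1 R0) + d) / lam)
    by (apply Rdiv_le_0_compat; [pose proof (Rabs_pos (g1 R0))|]; lra).
  exists (R0 + (Rabs (g1 R0) + d) / lam); split; [lra|].
  intros b b' Hb Hbb.
  replace eps with (4 / (t * d)) by (unfold d; field; lra).
  apply (van_der_corput_first g g1 g2); auto.
  - intros x Hx; pose proof (Hlow x ltac:(lra)); lra.
  - (* g' x >= g' R0 + lam (x - R0) >= d beyond the threshold. *)
    intros x Hx; destruct (mean_value g1 g2 R0 x (proj2 HD) ltac:(lra)) as [c [Hc E]].
    assert (lam <= g2 c) by (apply Hlow; lra).
    assert (lam * (x - R0) <= g2 c * (x - R0)) by (apply Rmult_le_compat_r; lra).
    assert (Hfar : Rabs (g1 R0) + d <= lam * (x - R0)).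
    { replace (Rabs (g1 R0) + d) with (lam * ((Rabs (g1 R0) + d) / lam)) by (field; lra).
      apply Rmult_le_compat_l; lra. }
    pose proof (Rle_abs (- g1 R0)) as Hneg; rewrite Rabs_Ropp in Hneg.
    rewrite Rabs_pos_eq; lra.
Qed.

Definition outer_estimates (g : R -> R) (R0 q2 K : R) : Prop :=
  forall t, 0 < t -> vanishing_tail g R0 t /\
    forall b, R0 <= b -> osc_bound g R0 b t (K * decay_rate q2 t) /\
                         osc_bound g R0 b t (K / sqrt t).

(* In the convex case g'' >= C2 x^q2 on [R0, oo), both bounds hold with a
   constant K: the growth bound via the sublevel estimate, the bound K/sqrt t via
   g'' >= C2 R0^q2 and the second-derivative estimate. *)
Lemma outer_estimates_convex g g1 g2 R0 C2 q2 : twice_diff g g1 g2 ->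
  0 < R0 -> 0 < C2 -> 0 <= q2 ->
  (forall x, R0 <= x -> C2 * Rpower x q2 <= g2 x) ->
  exists K, 0 <= K /\ outer_estimates g R0 q2 K.
Proof.
  intros HD HR HC Hq Hlow.
  set (lam := C2 * Rpower R0 q2).
  assert (Hl : 0 < lam) by (apply Rmult_lt_0_compat; [lra|apply Rpower_pos]).
  assert (Hlam : forall x, R0 <= x -> lam <= g2 x).
  { intros x Hx; eapply Rle_trans; [|apply Hlow; exact Hx].
    apply Rmult_le_compat_l; [lra|apply Rle_Rpower_l; lra]. }
  set (K1 := 2 * Rpower (2 / C2) (1 / (1 + q2)) + 8).
  set (K2 := 10 / sqrt lam).
  assert (HK1 : 0 <= K1) by (unfold K1; pose proof (Rpower_pos (2 / C2) (1 / (1 + q2))); lra).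
  assert (HK2 : 0 <= K2) by (left; apply Rdiv_lt_0_compat; [lra|apply sqrt_lt_R0; lra]).
  exists (K1 + K2); split; [lra|].
  intros t Ht; split; [apply (vanishing_tail_of_convexity g g1 g2 R0 lam); auto|].
  intros b Hb; split.
  - eapply osc_bound_weaken; [|apply (outer_bound_growth g g1 g2 R0 C2 q2); auto].
    pose proof (decay_rate_pos q2 t); fold K1; nra.
  - eapply osc_bound_weaken;
      [|apply (van_der_corput_second g g1 g2 t HD Ht R0 b lam Hb Hl);
        intros; apply Hlam; lra].
    assert (Hst : 0 < sqrt t) by (apply sqrt_lt_R0; lra).
    rewrite sqrt_mult by lra.
    replace (10 / (sqrt lam * sqrt t)) with (K2 / sqrt t)
      by (unfold K2; field; split; apply Rgt_not_eq; [|apply sqrt_lt_R0]; lra).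
    unfold Rdiv; apply Rmult_le_compat_r; [left; apply Rinv_0_lt_compat|]; lra.
Qed.

Lemma outer_estimates_opp g g1 g2 R0 q2 K : twice_diff g g1 g2 ->
  outer_estimates (fun x => - g x) R0 q2 K -> outer_estimates g R0 q2 K.
Proof.
  intros HD H t Ht; destruct (H t Ht) as [Htail Hb]; split.
  - intros eps He; destruct (Htail eps He) as [M [HM HMb]].
    exists M; split; [exact HM|]; intros; apply (osc_bound_opp g g1 g2); auto.
  - intros b Hbb; destruct (Hb b Hbb); split; apply (osc_bound_opp g g1 g2); auto.
Qed.

(* Since g'' does not vanish on [R0, oo) it has a constant sign there, and
   replacing g by -g reduces to the convex case. *)
Lemma outer_estimates_growth g g1 g2 R0 C2 q2 : twice_diff g g1 g2 ->
  0 < R0 -> 0 < C2 -> 0 <= q2 ->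
  (forall x, R0 <= x -> C2 * Rpower x q2 <= Rabs (g2 x)) ->
  exists K, 0 <= K /\ outer_estimates g R0 q2 K.
Proof.
  intros HD HR HC Hq Hlow.
  assert (Hsign : forall x, R0 <= x -> (forall z, R0 <= z <= x -> g2 z > 0) \/
                                       (forall z, R0 <= z <= x -> g2 z < 0)).
  { intros x Hx; apply (derive_sign_constant g1 g2 R0 x (proj2 HD)).
    intros z Hz E; pose proof (Hlow z ltac:(lra)) as Hz'; rewrite E, Rabs_R0 in Hz'.
    pose proof (Rpower_pos z q2); nra. }
  destruct (Rlt_or_le 0 (g2 R0)) as [P|N].
  - apply (outer_estimates_convex g g1 g2 R0 C2 q2); auto.
    intros x Hx; rewrite <- (Rabs_pos_eq (g2 x)); [apply Hlow; exact Hx|].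
    destruct (Hsign x Hx) as [A|A]; [left; apply A; lra|].
    pose proof (A R0 ltac:(lra)); lra.
  - destruct (outer_estimates_convex (fun x => - g x) (fun x => - g1 x) (fun x => - g2 x)
                R0 C2 q2) as [K [HK Hest]]; auto.
    + apply twice_diff_opp; exact HD.
    + intros x Hx; rewrite <- (Rabs_left (g2 x)); [apply Hlow; exact Hx|].
      destruct (Hsign x Hx) as [A|A]; [pose proof (A R0 ltac:(lra)); lra|apply A; lra].
    + exists K; split; [exact HK|]; apply (outer_estimates_opp g g1 g2); auto.
Qed.

Lemma outer_estimates_mono g R0 q2 K K' : K <= K' ->
  outer_estimates g R0 q2 K -> outer_estimates g R0 q2 K'.
Proof.
  intros HK E t Ht; destruct (E t Ht) as [Htail Hb]; split; [exact Htail|].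
  intros b Hb'; destruct (Hb b Hb') as [B1 B2]; split.
  - eapply osc_bound_weaken; [|exact B1].
    apply Rmult_le_compat_r; [left; apply decay_rate_pos|exact HK].
  - eapply osc_bound_weaken; [|exact B2].
    apply Rmult_le_compat_r; [left; apply Rinv_0_lt_compat, sqrt_lt_R0; lra|exact HK].
Qed.

Lemma outer_estimates_both_sides g g1 g2 C1 C2 q2 : twice_diff g g1 g2 ->
  C1 > 0 -> C2 > 0 -> q2 >= 0 ->
  (forall x, Rabs x >= C1 -> Rabs (g2 x) >= C2 * rpow (Rabs x) q2) ->
  exists K, 0 <= K /\ outer_estimates g C1 q2 K /\ outer_estimates (fun x => g (- x)) C1 q2 K.
Proof.
  intros HD HC1 HC2 Hq2 Hinf.
  destruct (outer_estimates_growth g g1 g2 C1 C2 q2 HD) as [KR [HKR ER]]; try lra.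
  { intros x Hx; pose proof (Hinf x ltac:(rewrite Rabs_pos_eq; lra)) as H.
    rewrite (Rabs_pos_eq x), rpow_pos_eq in H by lra; lra. }
  destruct (outer_estimates_growth (fun x => g (- x)) (fun x => - g1 (- x)) (fun x => g2 (- x))
              C1 C2 q2 (twice_diff_reflect g g1 g2 HD)) as [KL [HKL EL]]; try lra.
  { intros x Hx; pose proof (Hinf (- x) ltac:(rewrite Rabs_Ropp, Rabs_pos_eq; lra)) as H.
    rewrite Rabs_Ropp, (Rabs_pos_eq x), rpow_pos_eq in H by lra; lra. }
  exists (KR + KL); split; [lra|split; eapply outer_estimates_mono; eauto; lra].
Qed.

Lemma decay_rate_ge_1 q t : 0 <= q -> 0 < t < 1 -> 1 <= decay_rate q t.
Proof.
  intros Hq Ht; unfold decay_rate, Rpower.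
  apply Rle_trans with (exp 0); [rewrite exp_0; lra|].
  assert (ln t < 0) by (rewrite <- ln_1; apply ln_increasing; lra).
  assert (0 < 1 / (2 + q)) by (apply Rdiv_lt_0_compat; lra).
  left; apply exp_increasing; nra.
Qed.

Lemma Rpower_le_decay_rate q t e : 1 <= t -> 1 / (2 + q) <= e ->
  Rpower t (- e) <= decay_rate q t.
Proof. intros Ht He; apply Rle_Rpower; [exact Ht|lra]. Qed.

Lemma exponent_le_half q : 0 <= q -> 1 / (2 + q) <= 1 / 2.
Proof.
  intro Hq; apply Rmult_le_compat_l; [lra|apply Rinv_le_contravar; lra].
Qed.

Lemma inv_le_decay_rate q t : 0 <= q -> 1 <= t -> / t <= decay_rate q t.
Proof.
  intros Hq Ht; replace (/ t) with (Rpower t (- (1)))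
    by (rewrite Rpower_Ropp, Rpower_1; lra).
  apply Rpower_le_decay_rate; auto; pose proof (exponent_le_half q Hq); lra.
Qed.

Lemma inv_sqrt_le_decay_rate q t : 0 <= q -> 1 <= t -> / sqrt t <= decay_rate q t.
Proof.
  intros Hq Ht; rewrite <- Rpower_sqrt, <- Rpower_Ropp by lra.
  replace (/ 2) with (1 / 2) by field.
  apply Rpower_le_decay_rate; auto; pose proof (exponent_le_half q Hq); lra.
Qed.

Lemma inv_mul_le_decay_rate q t : 0 <= q -> 1 <= t ->
  / (t * decay_rate q t) <= decay_rate q t.
Proof.
  intros Hq Ht.
  replace (t * decay_rate q t) with (Rpower t (1 - 1 / (2 + q))).
  2:{ unfold decay_rate; rewrite <- (Rpower_1 t) at 2 by lra.
      rewrite <- Rpower_plus; f_equal; ring. }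
  rewrite <- Rpower_Ropp.
  apply Rpower_le_decay_rate; auto; pose proof (exponent_le_half q Hq); lra.
Qed.

Lemma decay_rate_scaling q t : 0 <= q -> 0 < t ->
  Rpower (decay_rate q t) q * t = / decay_rate q t * / decay_rate q t.
Proof.
  intros Hq Ht; unfold decay_rate.
  rewrite Rpower_mult, <- !Rpower_Ropp, Ropp_involutive.
  rewrite <- (Rpower_1 t) at 2 by lra.
  rewrite <- !Rpower_plus; f_equal; field; lra.
Qed.

Definition decay_on (g : R -> R) (q a b : R) : Prop :=
  exists C, forall t, 1 <= t -> osc_bound g a b t (C * decay_rate q t).

Lemma decay_on_point g q a : decay_on g q a a.
Proof.
  exists 0; intros; eapply osc_bound_weaken; [|apply osc_bound_point]; lra.
Qed.

Lemma decay_on_chasles g g1 g2 q a b c : twice_diff g g1 g2 ->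
  decay_on g q a b -> decay_on g q b c -> decay_on g q a c.
Proof.
  intros HD [C1 H1] [C2 H2]; exists (C1 + C2); intros t Ht.
  eapply osc_bound_weaken;
    [|apply (osc_bound_chasles g g1 g2 t HD _ _ _ _ _ (H1 t Ht) (H2 t Ht))].
  lra.
Qed.

Lemma decay_on_opp g g1 g2 q a b : twice_diff g g1 g2 ->
  decay_on (fun x => - g x) q a b -> decay_on g q a b.
Proof. intros HD [C H]; exists C; intros; apply (osc_bound_opp g g1 g2); auto. Qed.

Lemma decay_on_reflect g g1 g2 q a b : twice_diff g g1 g2 ->
  decay_on (fun x => g (- x)) q (- b) (- a) -> decay_on g q a b.
Proof. intros HD [C H]; exists C; intros; apply (osc_bound_reflect g g1 g2); auto. Qed.

(* To get decay on [x0,b] it suffices to bound the part beyond x0 + r by K r,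
   r the decay rate: the piece [x0, x0 + r] has length r. *)
Lemma decay_on_of_far_part g g1 g2 q x0 b K : twice_diff g g1 g2 -> 0 <= K -> x0 <= b ->
  (forall t, 1 <= t -> x0 + decay_rate q t < b ->
     osc_bound g (x0 + decay_rate q t) b t (K * decay_rate q t)) ->
  decay_on g q x0 b.
Proof.
  intros HD HK Hb Hfar; exists (1 + K); intros t Ht.
  pose proof (decay_rate_pos q t) as Hr.
  destruct (Rle_or_lt b (x0 + decay_rate q t)) as [Near|Far].
  - eapply osc_bound_weaken; [|apply (osc_bound_length g g1 g2 t HD x0 b Hb)]; nra.
  - eapply osc_bound_weaken;
      [|apply (osc_bound_chasles g g1 g2 t HD _ _ _ _ _
                 (osc_bound_length g g1 g2 t HD x0 (x0 + decay_rate q t) ltac:(lra))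
                 (Hfar t Ht Far))].
    lra.
Qed.

Definition right_decay (g : R -> R) (q x0 : R) : Prop :=
  exists eps, 0 < eps /\ forall b, x0 <= b -> b < x0 + eps -> decay_on g q x0 b.

Definition zero_of_order (g2 : R -> R) (q x0 : R) : Prop :=
  exists a del, a > 0 /\ del > 0 /\
    forall x, Rabs (x - x0) < del -> Rabs (g2 x) >= a * rpow (Rabs (x - x0)) q.

Section LocalDecay.
Variables (g g1 g2 : R -> R) (q x0 e0 : R).
Hypotheses (HD : twice_diff g g1 g2) (Hq : 0 < q) (He0 : 0 < e0)
  (Hconvex : forall z, x0 <= z <= x0 + e0 -> 0 <= g2 z).

(* A zero of g'' of order q: beyond x0 + r we have g'' >= a r^q, and the
   second-derivative estimate gives 10 / sqrt (a r^q t) = (10 / sqrt a) r. *)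
Lemma right_decay_degenerate_zero : zero_of_order g2 q x0 -> right_decay g q x0.
Proof.
  intros [a [del [Ha [Hdel Hlow]]]].
  exists (Rmin e0 del); split; [apply Rmin_pos; lra|].
  intros b Hb1 Hb2; pose proof (Rmin_l e0 del); pose proof (Rmin_r e0 del).
  apply (decay_on_of_far_part g g1 g2 q x0 b (10 / sqrt a)); auto; try lra.
  { left; apply Rdiv_lt_0_compat; [lra|apply sqrt_lt_R0; lra]. }
  intros t Ht Far; pose proof (decay_rate_pos q t) as Hr.
  set (r := decay_rate q t) in *.
  assert (Hlam : 0 < a * Rpower r q) by (apply Rmult_lt_0_compat; [lra|apply Rpower_pos]).
  replace (10 / sqrt a * r) with (10 / sqrt (a * Rpower r q * t)).
  - apply (van_der_corput_second g g1 g2 t HD ltac:(lra)); [lra|exact Hlam|].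
    intros x Hx; specialize (Hlow x ltac:(rewrite Rabs_pos_eq; lra)).
    rewrite (Rabs_pos_eq (x - x0)), (Rabs_pos_eq (g2 x)), rpow_pos_eq in Hlow
      by (try apply Hconvex; lra).
    apply Rle_trans with (a * Rpower (x - x0) q); [|lra].
    apply Rmult_le_compat_l; [lra|apply Rle_Rpower_l; lra].
  - rewrite Rmult_assoc; unfold r; rewrite decay_rate_scaling by lra; fold r.
    rewrite sqrt_mult, sqrt_square by (try apply Rmult_le_pos; left;
      try apply Rinv_0_lt_compat; lra).
    assert (sqrt a <> 0) by (apply Rgt_not_eq, sqrt_lt_R0; lra).
    field; split; [assumption|lra].
Qed.

(* A nondegenerate critical point: g' grows like (g''(x0)/2) (x - x0), so
   |g'| >= m r beyond x0 + r and van der Corput gives 4/(t m r) <= (4/m) r. *)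
Lemma right_decay_critical_point : g2 x0 > 0 -> g1 x0 = 0 -> right_decay g q x0.
Proof.
  intros Hpos Hcrit; set (m := g2 x0 / 2).
  assert (Hm : 0 < m) by (unfold m; lra).
  destruct (derive_linearization g1 x0 (g2 x0) (proj1 (is_derive_Reals _ _ _) (proj2 HD x0))
              m Hm) as [del [Hdel Hlin]].
  exists (Rmin e0 del); split; [apply Rmin_pos; lra|].
  intros b Hb1 Hb2; pose proof (Rmin_l e0 del); pose proof (Rmin_r e0 del).
  apply (decay_on_of_far_part g g1 g2 q x0 b (4 / m)); auto; try lra.
  { left; apply Rdiv_lt_0_compat; lra. }
  intros t Ht Far; pose proof (decay_rate_pos q t) as Hr.
  eapply osc_bound_weaken; [|apply (van_der_corput_first g g1 g2 _ b t (m * decay_rate q t))].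
  - replace (4 / (t * (m * decay_rate q t))) with (4 / m * / (t * decay_rate q t))
      by (field; repeat split; lra).
    apply Rmult_le_compat_l; [left; apply Rdiv_lt_0_compat; lra|].
    apply inv_mul_le_decay_rate; lra.
  - exact HD.
  - lra.
  - lra.
  - apply Rmult_lt_0_compat; lra.
  - intros; apply Hconvex; lra.
  - intros x Hx; specialize (Hlin x ltac:(rewrite Rabs_pos_eq; lra)).
    rewrite Hcrit, (Rabs_pos_eq (x - x0)) in Hlin by lra.
    apply Rabs_le_between in Hlin; unfold m in *.
    assert (g2 x0 / 2 * decay_rate q t <= g2 x0 / 2 * (x - x0))
      by (apply Rmult_le_compat_l; lra).
    rewrite Rabs_pos_eq; lra.
Qed.

(* A regular point: |g'| >= |g'(x0)|/2 near x0, so the integral is O(1/t). *)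
Lemma right_decay_regular_point : g1 x0 <> 0 -> right_decay g q x0.
Proof.
  intro Hreg; set (l := g2 x0); set (d := Rabs (g1 x0) / 2).
  assert (Hd : 0 < d) by (unfold d; apply Rdiv_lt_0_compat; [apply Rabs_pos_lt|]; lra).
  destruct (derive_linearization g1 x0 l (proj1 (is_derive_Reals _ _ _) (proj2 HD x0))
              1 ltac:(lra)) as [del [Hdel Hlin]].
  set (w := d / (Rabs l + 1)).
  assert (Hw : 0 < w) by (unfold w; apply Rdiv_lt_0_compat; [|pose proof (Rabs_pos l)]; lra).
  assert (Hwl : (Rabs l + 1) * w = d) by (unfold w; field; pose proof (Rabs_pos l); lra).
  set (eps := Rmin (Rmin e0 del) w).
  assert (Heps : 0 < eps /\ eps <= e0 /\ eps <= del /\ eps <= w).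
  { unfold eps; pose proof (Rmin_l (Rmin e0 del) w); pose proof (Rmin_r (Rmin e0 del) w).
    pose proof (Rmin_l e0 del); pose proof (Rmin_r e0 del).
    repeat split; try lra; repeat apply Rmin_pos; lra. }
  exists eps; split; [lra|]; intros b Hb1 Hb2.
  exists (4 / d); intros t Ht.
  eapply osc_bound_weaken; [|apply (van_der_corput_first g g1 g2 x0 b t d); auto; try lra].
  - replace (4 / (t * d)) with (4 / d * / t) by (field; lra).
    apply Rmult_le_compat_l; [left; apply Rdiv_lt_0_compat; lra|].
    apply inv_le_decay_rate; lra.
  - intros; apply Hconvex; lra.
  - (* |g' x - g' x0| <= (|l| + 1) |x - x0| <= d. *)
    intros x Hx; specialize (Hlin x ltac:(rewrite Rabs_pos_eq; lra)).
    rewrite (Rabs_pos_eq (x - x0)) in Hlin by lra.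
    assert (Hlx : Rabs (l * (x - x0)) <= Rabs l * w).
    { rewrite Rabs_mult, (Rabs_pos_eq (x - x0)) by lra.
      apply Rmult_le_compat_l; [apply Rabs_pos|lra]. }
    assert (Hdiff : Rabs (g1 x - g1 x0) <= d).
    { replace (g1 x - g1 x0) with ((g1 x - g1 x0 - l * (x - x0)) + l * (x - x0)) by ring.
      eapply Rle_trans; [apply Rabs_triang|]; nra. }
    pose proof (Rabs_triang_inv (g1 x0) (g1 x0 - g1 x)) as Htri.
    replace (g1 x0 - (g1 x0 - g1 x)) with (g1 x) in Htri by ring.
    rewrite Rabs_minus_sym in Htri; unfold d in *; lra.
Qed.

Lemma right_decay_convex : (g2 x0 = 0 -> zero_of_order g2 q x0) -> right_decay g q x0.
Proof.
  intro Hord.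
  destruct (Req_dec (g2 x0) 0) as [Z|NZ]; [apply right_decay_degenerate_zero, Hord, Z|].
  destruct (Req_dec (g1 x0) 0) as [Z1|NZ1]; [|apply right_decay_regular_point, NZ1].
  apply right_decay_critical_point; [|exact Z1].
  pose proof (Hconvex x0 ltac:(lra)); lra.
Qed.

End LocalDecay.

Definition isolated_zeros_at (g2 : R -> R) (x0 : R) : Prop :=
  exists rho, 0 < rho /\ forall x, 0 < Rabs (x - x0) < rho -> g2 x <> 0.

(* Near an isolated zero g'' keeps one sign on a right neighbourhood [x0, x0 + e0]
   (by Darboux, since it has no zero in (x0, x0 + e0]); if it is nonpositive
   there, pass to -g. *)
Lemma right_decay_at g g1 g2 q x0 : twice_diff g g1 g2 -> 0 < q ->
  isolated_zeros_at g2 x0 -> (g2 x0 = 0 -> zero_of_order g2 q x0) -> right_decay g q x0.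
Proof.
  intros HD Hq [rho [Hrho Hiso]] Hord.
  set (e0 := rho / 2); assert (He0 : 0 < e0) by (unfold e0; lra).
  assert (Hnz : forall z, x0 <= z <= x0 + e0 -> g2 z <> 0 ->
                forall w, z <= w <= x0 + e0 -> g2 w <> 0).
  { intros z Hz Nz w Hw; destruct (Req_dec w x0) as [->|Nw].
    { assert (z = x0) by lra; subst z; exact Nz. }
    apply Hiso; split; [apply Rabs_pos_lt; lra|rewrite Rabs_pos_eq; unfold e0 in *; lra]. }
  assert (Hsame : forall z, x0 <= z <= x0 + e0 -> g2 z <> 0 -> g2 z * g2 (x0 + e0) > 0).
  { intros z Hz Nz.
    destruct (derive_sign_constant g1 g2 z (x0 + e0) (proj2 HD) (Hnz z Hz Nz)) as [A|A];
      pose proof (A z ltac:(lra)); pose proof (A (x0 + e0) ltac:(lra)); nra. }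
  destruct (Rlt_or_le 0 (g2 (x0 + e0))) as [P|N].
  - apply (right_decay_convex g g1 g2 q x0 e0); auto.
    intros z Hz; destruct (Req_dec (g2 z) 0) as [E|Nz]; [lra|].
    pose proof (Hsame z Hz Nz); nra.
  - destruct (right_decay_convex (fun x => - g x) (fun x => - g1 x) (fun x => - g2 x) q x0 e0)
      as [eps [Heps Hb]]; auto.
    + apply twice_diff_opp, HD.
    + intros z Hz; destruct (Req_dec (g2 z) 0) as [E|Nz]; [lra|].
      pose proof (Hsame z Hz Nz); nra.
    + intro E; destruct (Hord ltac:(lra)) as [a [del [Ha [Hdel Hlow]]]].
      exists a, del; repeat split; auto; intros x Hx; rewrite Rabs_Ropp; auto.
    + exists eps; split; [exact Heps|]; intros b Hb1 Hb2.
      apply (decay_on_opp g g1 g2); auto.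
Qed.

Lemma left_decay_at g g1 g2 q x0 : twice_diff g g1 g2 -> 0 < q ->
  isolated_zeros_at g2 x0 -> (g2 x0 = 0 -> zero_of_order g2 q x0) ->
  exists eps, 0 < eps /\ forall a, a <= x0 -> x0 - eps < a -> decay_on g q a x0.
Proof.
  intros HD Hq [rho [Hrho Hiso]] Hord.
  destruct (right_decay_at (fun x => g (- x)) (fun x => - g1 (- x)) (fun x => g2 (- x)) q (- x0))
    as [eps [He Hb]]; auto.
  - apply twice_diff_reflect, HD.
  - exists rho; split; [exact Hrho|]; intros x Hx; apply Hiso.
    replace (- x - x0) with (- (x - - x0)) by ring; rewrite Rabs_Ropp; exact Hx.
  - intro E; rewrite Ropp_involutive in E; destruct (Hord E) as [a [del [Ha [Hd Hl]]]].
    exists a, del; repeat split; auto; intros x Hx.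
    replace (x - - x0) with (- (- x - x0)) by ring; rewrite Rabs_Ropp.
    apply Hl; replace (- x - x0) with (- (x - - x0)) by ring; rewrite Rabs_Ropp; exact Hx.
  - exists eps; split; [exact He|]; intros a Ha1 Ha2.
    apply (decay_on_reflect g g1 g2); auto; apply Hb; lra.
Qed.

Lemma interval_local_to_global (P : R -> R -> Prop) A B : A <= B -> (forall a, P a a) ->
  (forall a b c, a <= b -> b <= c -> P a b -> P b c -> P a c) ->
  (forall x0, A <= x0 <= B -> exists eps, 0 < eps /\ forall a b, A <= a -> a <= x0 ->
      x0 <= b -> b <= B -> x0 - eps < a -> b < x0 + eps -> P a b) ->
  P A B.
Proof.
  intros HAB Hrefl Htrans Hloc.
  set (E := fun x => A <= x <= B /\ P A x).
  destruct (completeness E) as [s [Hub Hlub]].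
  { exists B; intros x [Hx _]; lra. }
  { exists A; split; [lra|apply Hrefl]. }
  assert (HAs : A <= s) by (apply Hub; split; [lra|apply Hrefl]).
  assert (HsB : s <= B) by (apply Hlub; intros x [Hx _]; lra).
  destruct (Hloc s ltac:(lra)) as [eps [He Hnear]].
  (* Some x in E lies within eps below s ... *)
  assert (Hx : exists x, E x /\ s - eps < x).
  { apply NNPP; intro N.
    assert (s <= s - eps); [|lra].
    apply Hlub; intros x Ex; destruct (Rle_or_lt x (s - eps)) as [|L]; [assumption|].
    exfalso; apply N; exists x; auto. }
  destruct Hx as [x [[Hx PAx] Hxs']].
  assert (Hxs : x <= s) by (apply Hub; split; auto).
  (* ... so P A s' holds for s' = min B (s + eps/2), forcing s' = s = B. *)
  set (s' := Rmin B (s + eps / 2)).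
  assert (Hs'B : s' <= B) by apply Rmin_l.
  assert (Hs'e : s' <= s + eps / 2) by apply Rmin_r.
  assert (Hss' : s <= s') by (apply Rmin_glb; lra).
  assert (PAs' : P A s') by (apply (Htrans A x s'); [lra|lra|exact PAx|apply Hnear; lra]).
  assert (Hs's : s' <= s) by (apply Hub; split; [lra|exact PAs']).
  replace B with s'; [exact PAs'|].
  unfold s' in *; destruct (Rle_or_lt B (s + eps / 2)) as [L|L].
  - apply Rmin_left, L.
  - rewrite Rmin_right in Hs's by lra; lra.
Qed.

Lemma middle_region_decay g g1 g2 q A B : twice_diff g g1 g2 -> 0 < q -> A <= B ->
  (forall x0, isolated_zeros_at g2 x0) -> (forall x0, g2 x0 = 0 -> zero_of_order g2 q x0) ->
  decay_on g q A B.
Proof.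
  intros HD Hq HAB Hiso Hord.
  apply interval_local_to_global; auto.
  - intros; apply decay_on_point.
  - intros a b c _ _; apply (decay_on_chasles g g1 g2); auto.
  - intros x0 Hx0.
    destruct (right_decay_at g g1 g2 q x0 HD Hq (Hiso x0) (Hord x0)) as [e1 [He1 H1]].
    destruct (left_decay_at g g1 g2 q x0 HD Hq (Hiso x0) (Hord x0)) as [e2 [He2 H2]].
    exists (Rmin e1 e2); split; [apply Rmin_pos; auto|].
    intros a b _ Ha Hb _ Ha2 Hb2; pose proof (Rmin_l e1 e2); pose proof (Rmin_r e1 e2).
    apply (decay_on_chasles g g1 g2 q a x0 b HD); [apply H2|apply H1]; lra.
Qed.

Lemma Rabs_RInt_swap (f : R -> R) x y : ex_RInt f x y -> Rabs (RInt f y x) = Rabs (RInt f x y).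
Proof.
  intro H; rewrite <- (opp_RInt_swap (V := R_CompleteNormedModule) f x y H).
  apply Rabs_Ropp.
Qed.

Lemma truncations_cauchy (f : R -> R) R0 : (forall u v, ex_RInt f u v) ->
  (forall eps, 0 < eps -> exists M, R0 <= M /\ forall b b', M <= b -> b <= b' ->
       Rabs (RInt f b b') <= eps /\ Rabs (RInt f (- b') (- b)) <= eps) ->
  forall eps, 0 < eps -> exists M, R0 <= M /\ forall a b a' b',
    M <= a -> M <= b -> M <= a' -> M <= b' ->
    Rabs (RInt f (- a) b - RInt f (- a') b') <= 2 * eps.
Proof.
  intros Hex Htail eps He; destruct (Htail eps He) as [M [HM Ht]]; exists M; split; [exact HM|].
  assert (Hr : forall x y, M <= x -> M <= y -> Rabs (RInt f x y) <= eps).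
  { intros x y Hx Hy; destruct (Rle_or_lt x y) as [L|L]; [apply (Ht x y); lra|].
    rewrite <- Rabs_RInt_swap by apply Hex; apply (Ht y x); lra. }
  assert (Hl : forall x y, M <= x -> M <= y -> Rabs (RInt f (- x) (- y)) <= eps).
  { intros x y Hx Hy; destruct (Rle_or_lt x y) as [L|L].
    - rewrite <- Rabs_RInt_swap by apply Hex; apply (Ht x y); lra.
    - apply (Ht y x); lra. }
  intros a b a' b' Ha Hb Ha' Hb'.
  rewrite <- (RInt_Chasles f (- a) (- a') b), <- (RInt_Chasles f (- a') b' b) by apply Hex.
  replace (plus (RInt f (- a) (- a')) (plus (RInt f (- a') b') (RInt f b' b))
           - RInt f (- a') b') with (RInt f (- a) (- a') + RInt f b' b)
    by (unfold plus; simpl; ring).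
  eapply Rle_trans; [apply Rabs_triang|].
  pose proof (Hl a a' Ha Ha'); pose proof (Hr b' b Hb' Hb); lra.
Qed.

(* Cauchy criterion for the improper integral over R: if the integrals over
   [b,b'] and [-b',-b] become small for b large, int_{-a}^{b} f converges as
   a, b -> oo (through the sequence of symmetric truncations), and the limit
   inherits any uniform bound on the truncations. *)
Lemma improper_integral_of_small_tails (f : R -> R) R0 B : (forall u v, ex_RInt f u v) ->
  (forall eps, 0 < eps -> exists M, R0 <= M /\ forall b b', M <= b -> b <= b' ->
       Rabs (RInt f b b') <= eps /\ Rabs (RInt f (- b') (- b)) <= eps) ->
  (forall a b, R0 <= a -> R0 <= b -> Rabs (RInt f (- a) b) <= B) ->
  exists I, improper_integral_R f I /\ Rabs I <= B.
Proof.
  intros Hex Htail Hbd.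
  pose proof (truncations_cauchy f R0 Hex Htail) as Hclose.
  set (u := fun n => RInt f (- INR n) (INR n) : R).
  assert (Hu : Cauchy_crit u).
  { intros eps He; destruct (Hclose (eps / 4) ltac:(lra)) as [M [HM Hc]].
    destruct (INR_unbounded M) as [N HN]; exists N; intros n m Hn Hm.
    apply le_INR in Hn; apply le_INR in Hm; unfold R_dist, u.
    eapply Rle_lt_trans; [apply Hc; lra|lra]. }
  destruct (Rcomplete.R_complete u Hu) as [I HI].
  (* For a, b beyond M the truncation is within 2 eps of u n for large n. *)
  assert (Happrox : forall eps, 0 < eps -> exists M, R0 <= M /\ forall a b,
            M <= a -> M <= b -> Rabs (RInt f (- a) b - I) <= 3 * eps).
  { intros eps He; destruct (Hclose eps He) as [M [HM Hc]]; exists M; split; [exact HM|].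
    intros a b Ha Hb; destruct (HI eps He) as [N1 HN1].
    destruct (INR_unbounded M) as [N2 HN2].
    set (n := max N1 N2).
    assert (Hn1 : (n >= N1)%nat) by apply Nat.le_max_l.
    assert (Hn2 : INR N2 <= INR n) by (apply le_INR, Nat.le_max_r).
    specialize (HN1 n Hn1); unfold R_dist in HN1.
    assert (Rabs (RInt f (- a) b - u n) <= 2 * eps) by (unfold u; apply Hc; lra).
    replace (RInt f (- a) b - I) with ((RInt f (- a) b - u n) + (u n - I)) by ring.
    eapply Rle_trans; [apply Rabs_triang|lra]. }
  exists I; split.
  - intros eps He; destruct (Happrox (eps / 4) ltac:(lra)) as [M [HM Ha]].
    exists M; intros a b Ha' Hb'; exists (RInt f (- a) b); split.
    + exists (ex_RInt_Reals_0 f (- a) b (Hex _ _)); symmetry; apply RInt_Reals.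
    + apply Rle_lt_trans with (3 * (eps / 4)); [apply Ha; lra|lra].
  - apply Rnot_lt_le; intro Hc.
    destruct (Happrox ((Rabs I - B) / 4) ltac:(lra)) as [M [HM Ha]].
    pose proof (Ha M M ltac:(lra) ltac:(lra)) as Hnear; pose proof (Hbd M M HM HM) as Hle.
    set (v := RInt f (- M) M : R) in *.
    pose proof (Rabs_triang_inv I (I - v)) as Htri.
    replace (I - (I - v)) with v in Htri by ring.
    rewrite Rabs_minus_sym in Htri; lra.
Qed.

Lemma sqrt_sum_squares_le x y : sqrt (x ^ 2 + y ^ 2) <= Rabs x + Rabs y.
Proof.
  pose proof (Rabs_pos x); pose proof (Rabs_pos y).
  rewrite <- (sqrt_pow2 (Rabs x + Rabs y)) by lra.
  apply sqrt_le_1_alt; rewrite <- (pow2_abs x), <- (pow2_abs y); nra.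
Qed.

Lemma osc_integral_bound_weaken g t B B' : B <= B' ->
  osc_integral_bound g t B -> osc_integral_bound g t B'.
Proof. intros Hle [Ic [Is [Hc [Hs Hb]]]]; exists Ic, Is; repeat split; auto; lra. Qed.

Lemma osc_integral_bound_of_regions g g1 g2 R0 t X Y : twice_diff g g1 g2 ->
  vanishing_tail g R0 t -> vanishing_tail (fun x => g (- x)) R0 t ->
  (forall b, R0 <= b -> osc_bound g R0 b t X) ->
  (forall a, R0 <= a -> osc_bound (fun x => g (- x)) R0 a t X) ->
  osc_bound g (- R0) R0 t Y ->
  osc_integral_bound g t (2 * (2 * X + Y)).
Proof.
  intros HD Hright Hleft HR HL Hmid.
  assert (Htails : forall eps, 0 < eps -> exists M, R0 <= M /\ forall b b', M <= b -> b <= b' ->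
            osc_bound g b b' t eps /\ osc_bound g (- b') (- b) t eps).
  { intros eps He; destruct (Hright eps He) as [M1 [HM1 H1]].
    destruct (Hleft eps He) as [M2 [HM2 H2]].
    exists (Rmax M1 M2); split; [eapply Rle_trans; [exact HM1|apply Rmax_l]|].
    intros b b' Hb Hbb; pose proof (Rmax_l M1 M2); pose proof (Rmax_r M1 M2); split.
    - apply H1; lra.
    - apply (osc_bound_reflect g g1 g2); auto; rewrite !Ropp_involutive; apply H2; lra. }
  assert (Htrunc : forall a b, R0 <= a -> R0 <= b -> osc_bound g (- a) b t (2 * X + Y)).
  { intros a b Ha Hb.
    assert (Hl : osc_bound g (- a) (- R0) t X)
      by (apply (osc_bound_reflect g g1 g2); auto; rewrite !Ropp_involutive; apply HL, Ha).
    eapply osc_bound_weaken;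
      [|apply (osc_bound_chasles g g1 g2 t HD _ _ _ _ _
                 (osc_bound_chasles g g1 g2 t HD _ _ _ _ _ Hl Hmid) (HR b Hb))].
    lra. }
  destruct (improper_integral_of_small_tails (fun x => cos (t * g x)) R0 (2 * X + Y))
    as [Ic [HIc HIcB]].
  { intros; apply (ex_RInt_phase_cos g g1 g2 t HD). }
  { intros eps He; destruct (Htails eps He) as [M [HM HT]]; exists M; split; [exact HM|].
    intros b b' Hb Hbb; destruct (HT b b' Hb Hbb) as [[A _] [B _]]; split; assumption. }
  { intros a b Ha Hb; apply (Htrunc a b Ha Hb). }
  destruct (improper_integral_of_small_tails (fun x => sin (t * g x)) R0 (2 * X + Y))
    as [Is [HIs HIsB]].
  { intros; apply (ex_RInt_phase_sin g g1 g2 t HD). }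
  { intros eps He; destruct (Htails eps He) as [M [HM HT]]; exists M; split; [exact HM|].
    intros b b' Hb Hbb; destruct (HT b b' Hb Hbb) as [[_ A] [_ B]]; split; assumption. }
  { intros a b Ha Hb; apply (Htrunc a b Ha Hb). }
  exists Ic, Is; split; [exact HIc|split; [exact HIs|]].
  eapply Rle_trans; [apply sqrt_sum_squares_le|lra].
Qed.

Lemma outer_estimates_large_t g R0 q2 K q t b : outer_estimates g R0 q2 K -> 0 <= K ->
  0 <= q -> 1 <= t -> R0 <= b -> osc_bound g R0 b t (K * decay_rate q t).
Proof.
  intros E HK Hq Ht Hb.
  eapply osc_bound_weaken; [|apply (proj2 (proj2 (E t ltac:(lra)) b Hb))].
  apply Rmult_le_compat_l; [exact HK|apply inv_sqrt_le_decay_rate; auto].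
Qed.

Lemma list_separated (l : list R) x0 :
  exists rho, 0 < rho /\ forall z, In z l -> z <> x0 -> rho <= Rabs (z - x0).
Proof.
  induction l as [|z l [r [Hr Hl]]].
  - exists 1; split; [lra|intros z []].
  - destruct (Req_dec z x0) as [->|N].
    + exists r; split; [exact Hr|]; intros z' [<-|I] Nz; [congruence|auto].
    + exists (Rmin r (Rabs (z - x0))); split; [apply Rmin_pos; [|apply Rabs_pos_lt]; lra|].
      intros z' [<-|I] Nz; [apply Rmin_r|eapply Rle_trans; [apply Rmin_l|auto]].
Qed.

Lemma isolated_zeros_of_list (g2 : R -> R) zs : (forall x, g2 x = 0 <-> In x zs) ->
  forall x0, isolated_zeros_at g2 x0.
Proof.
  intros Hzs x0; destruct (list_separated zs x0) as [rho [Hrho Hsep]].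
  exists rho; split; [exact Hrho|]; intros x [Hx1 Hx2] E.
  assert (x <> x0) by (intros ->; rewrite Rminus_diag, Rabs_R0 in Hx1; lra).
  specialize (Hsep x (proj1 (Hzs x) E) H); lra.
Qed.

Theorem mainTheorem8 (h h1 h2 : R -> R) (zs : list R) (q1 q2 C1 C2 : R)
  (Hd1 : forall x, derivable_pt_lim h x (h1 x))
  (Hd2 : forall x, derivable_pt_lim h1 x (h2 x))
  (Hzs_nodup : NoDup zs)
  (Hzs : forall x, h2 x = 0 <-> In x zs)
  (Hq1 : q1 > 0)
  (Hord : forall xi, In xi zs -> exists a delta, a > 0 /\ delta > 0 /\
     forall x, Rabs (x - xi) < delta -> Rabs (h2 x) >= a * rpow (Rabs (x - xi)) q1)
  (HC1 : C1 > 0) (HC2 : C2 > 0) (Hq2 : q2 >= 0)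
  (Hinf : forall x, Rabs x >= C1 -> Rabs (h2 x) >= C2 * rpow (Rabs x) q2) :
  exists C,
    (forall t, 0 < t < 1 -> osc_integral_bound h t (C * Rpower t (- (1 / (2 + q2))))) /\
    (forall t, t >= 1 -> osc_integral_bound h t (C * Rpower t (- (1 / (2 + q1))))).
Proof.
  pose proof (twice_diff_of_Reals h h1 h2 Hd1 Hd2) as HD.
  destruct (outer_estimates_both_sides h h1 h2 C1 C2 q2 HD HC1 HC2 Hq2 Hinf)
    as [K [HK [ER EL]]].
  destruct (middle_region_decay h h1 h2 q1 (- C1) C1 HD Hq1) as [Cm HCm];
    [lra|apply (isolated_zeros_of_list h2 zs Hzs)|intros x0 Hx0; apply Hord, Hzs, Hx0|].
  exists (2 * (2 * K + 2 * C1 + Rabs Cm)); split; intros t Ht.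
  - (* 0 < t < 1: outer decay t^(-1/(2+q2)), trivial bound 2 C1 on [-C1, C1]. *)
    pose proof (decay_rate_ge_1 q2 t ltac:(lra) Ht) as Hr.
    apply (osc_integral_bound_weaken _ _ (2 * (2 * (K * decay_rate q2 t) + (C1 - - C1)))).
    { unfold decay_rate in *; pose proof (Rabs_pos Cm); nra. }
    apply (osc_integral_bound_of_regions h h1 h2 C1 t _ _ HD (proj1 (ER t ltac:(lra)))
             (proj1 (EL t ltac:(lra)))).
    + intros b Hb; apply (proj2 (ER t ltac:(lra)) b Hb).
    + intros b Hb; apply (proj2 (EL t ltac:(lra)) b Hb).
    + apply (osc_bound_length h h1 h2 t HD); lra.
  - (* t >= 1: outer decay 1/sqrt t, middle decay t^(-1/(2+q1)). *)
    pose proof (decay_rate_pos q1 t) as Hr.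
    apply (osc_integral_bound_weaken _ _
             (2 * (2 * (K * decay_rate q1 t) + Rabs Cm * decay_rate q1 t))).
    { unfold decay_rate in *; nra. }
    apply (osc_integral_bound_of_regions h h1 h2 C1 t _ _ HD (proj1 (ER t ltac:(lra)))
             (proj1 (EL t ltac:(lra)))).
    + intros b Hb; apply (outer_estimates_large_t h C1 q2 K); auto; lra.
    + intros b Hb; apply (outer_estimates_large_t _ C1 q2 K); auto; lra.
    + eapply osc_bound_weaken; [|apply (HCm t); lra].
      apply Rmult_le_compat_r; [lra|apply Rle_abs].
Qed.
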